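(* Let $n\ge1$, $\mathfrak g=sl(n+1,\mathbb C)$, $a\in\mathbb C$, $m(a)=-\tfrac12(a+n+1)$, and let $\rho_a$ be the representation of $\mathfrak g$ on $\mathcal P=\mathbb C[z_1,\dots,z_n]$ given, for $f\in\mathcal P$, $1\le k\le n$, $1\le i\ne j\le n$, by $\rho_a(H_k)f=m(a)f-z_k\partial_{z_k}f-\sum_{j}z_j\partial_{z_j}f$, $\rho_a(E_{1,k+1})f=-m(a)z_kf+z_k\sum_jz_j\partial_{z_j}f$, $\rho_a(E_{k+1,1})f=-\partial_{z_k}f$, $\rho_a(E_{i+1,j+1})f=-z_j\partial_{z_i}f$. Assume $\mathcal Q\neq(0)$ is a finite-dimensional subspace of $\mathcal P$ invariant under $\rho_a(X)$ for all $X\in\mathfrak g$. Then $m(a)$ is a non-negative integer, $\mathcal Q=\mathcal P_{m(a)}$, and the restriction of $\rho_a$ to $\mathcal Q$ coincides with $d\pi_{m(a)}$.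
   Context: $E_{ij}$ is the $(n+1)\times(n+1)$ matrix with $1$ in entry $(i,j)$ and $0$ elsewhere; $H_k=E_{k+1,k+1}-E_{11}$; the $H_k$ and $E_{ij}$ ($i\ne j$) form a basis of $\mathfrak g$. (Equivalently, $\rho_a(X)=W(i\tilde X+\tfrac12a\varphi_1(X))$ via the Weyl correspondence, but the formulas above determine $\rho_a$.) For an integer $m\ge0$, $\mathcal P_m$ is the space of complex polynomials on $\mathbb C^n$ of degree $\le m$, and $d\pi_m$ is the representation of $\mathfrak g$ on $\mathcal P_m$ given by $d\pi_m(H_k)f=mf-z_k\partial_{z_k}f-\sum_jz_j\partial_{z_j}f$, $d\pi_m(E_{1,k+1})f=-mz_kf+z_k\sum_jz_j\partial_{z_j}f$, $d\pi_m(E_{k+1,1})f=-\partial_{z_k}f$, $d\pi_m(E_{i+1,j+1})f=-z_j\partial_{z_i}f$ (this is the complexified differential of the representation $\pi_m$ of $SU(n+1)$ on $\mathcal P_m$, $(\pi_m(g)f)(z)=(bz^t+a)^mf(g^{-1}\cdot z)$ where $g^{-1}=\begin{pmatrix}a&b\\c&d\end{pmatrix}$ and $g\cdot z=(a+bz^t)^{-1}(c+dz^t)^t$). *)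

From HB Require Import structures.
From mathcomp Require Import all_boot all_order all_algebra.
From mathcomp Require Import mpoly.
Set Implicit Arguments. Unset Strict Implicit. Unset Printing Implicit Defensive.
Import Order.TTheory GRing.Theory Num.Theory.
Local Open Scope ring_scope.

Section Rep.
Variables (C : numClosedFieldType) (n : nat).
Notation P := {mpoly C[n]}.

(* index of coordinate z_k (k : 'I_n) inside 'I_(n+1): paper's index k+1 *)
Definition sh (k : 'I_n) : 'I_n.+1 := lift ord0 k.

Definition euler (f : P) : P := \sum_(j < n) 'X_j * mderiv j f.

Definition opH (c : C) (k : 'I_n) (f : P) : P :=
  c *: f - 'X_k * mderiv k f - euler f.
Definition opE1 (c : C) (k : 'I_n) (f : P) : P :=
  - (c *: ('X_k * f)) + 'X_k * euler f.
Definition opE2 (k : 'I_n) (f : P) : P := - mderiv k f.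
Definition opEij (i j : 'I_n) (f : P) : P := - ('X_j * mderiv i f).

(* sl(n+1): traceless (n+1)x(n+1) matrices; index 0 is the paper's index 1 *)
Definition in_sl (X : 'M[C]_n.+1) : Prop := \tr X = 0.

(* linear extension of the formulas: X = sum_k X_{k+1,k+1} H_k + sum_{i<>j} X_ij E_ij
   (valid for traceless X) *)
Definition rep (c : C) (X : 'M[C]_n.+1) (f : P) : P :=
  \sum_(k < n) X (sh k) (sh k) *: opH c k f
  + \sum_(k < n) X ord0 (sh k) *: opE1 c k f
  + \sum_(k < n) X (sh k) ord0 *: opE2 k f
  + \sum_(i < n) \sum_(j < n | i != j) X (sh i) (sh j) *: opEij i j f.

Definition m_of (a : C) : C := - ((a + n.+1%:R) / 2%:R).

Definition rho (a : C) (X : 'M[C]_n.+1) (f : P) : P := rep (m_of a) X f.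

Definition dpi (m : nat) (X : 'M[C]_n.+1) (f : P) : P := rep m%:R X f.

(* P_m : polynomials of total degree <= m *)
Definition Pm (m : nat) (f : P) : Prop := (msize f <= m.+1)%N.

Definition subspace (Q : P -> Prop) : Prop :=
  Q 0 /\ forall (c : C) (f g : P), Q f -> Q g -> Q (c *: f + g).

Definition findim (Q : P -> Prop) : Prop :=
  exists s : seq P, forall f, Q f ->
    exists coef : 'I_(size s) -> C, f = \sum_(i < size s) coef i *: s`_i.
End Rep.

From HB Require Import structures.
From mathcomp Require Import all_boot all_order all_algebra.
From mathcomp Require Import mpoly.
Set Implicit Arguments. Unset Strict Implicit. Unset Printing Implicit Defensive.
Import Order.TTheory GRing.Theory Num.Theory.
Local Open Scope ring_scope.

(** The lowering operators [rho_a(E_{k+1,1}) = -d/dz_k] let one differentiate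
    any nonzero element of [Q] down to a constant, so [1 \in Q].  The raising
    operators act by [rho_a(E_{1,k+1}) = z_k (E - m(a))], [E] the Euler operator,
    so they send a monomial [z^b] to [(|b| - m(a)) z^(b + e_k)].  Since the
    degrees in [Q] are bounded, raising must eventually kill a monomial that
    occurs in [Q]: this forces [m(a) = m] to be a natural number at least the
    degree of every element of [Q], so [Q] lies in [P_m]; conversely, starting
    from [1], raising reaches every monomial of degree at most [m] with a
    nonzero factor. *)

Section MonomialCalculus.
Variables (R : nzRingType) (n : nat).
Implicit Types (f h : {mpoly R[n]}) (b : 'X_{1..n}) (k : 'I_n).

Lemma mnm_neq0_exists b : b != 0%MM -> exists k, b k != 0%N.
Proof.
move=> b_nz; apply/existsP; apply: contraNT b_nz => /existsPn b0.
by apply/eqP/mnmP => i; rewrite mnm0E; apply/eqP/negPn/b0.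
Qed.

Lemma mnm_split1 b k : b k != 0%N -> b = (U_(k) + (b - U_(k)))%MM.
Proof. by move=> bk_nz; rewrite addmC submK // lep1mP. Qed.

Lemma mcoeffXkM_add k h b : ('X_k * h)@_(U_(k) + b) = h@_b.
Proof. by rewrite -commr_mpolyX mcoeffMX. Qed.

Lemma mcoeffXkM_eq0 k h b : b k = 0%N -> ('X_k * h)@_b = 0.
Proof.
move=> bk0; apply: memN_msupp_eq0; apply/negP.
rewrite -commr_mpolyX (perm_mem (msuppMX _ _)) => /mapP[b' _ def_b].
by move: bk0; rewrite def_b mnmDE mnm1E eqxx.
Qed.

Lemma mcoeff_mderiv_sub1 k f b : b k != 0%N ->
  (mderiv k f)@_(b - U_(k)) = f@_b *+ b k.
Proof.
move=> bk_nz; rewrite mcoeff_mderiv submK ?lep1mP //.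
by rewrite mnmBE mnm1E eqxx subn1 prednK // lt0n.
Qed.

Lemma mcoeff_Xk_mderiv k f b : ('X_k * mderiv k f)@_b = f@_b *+ b k.
Proof.
have [bk0|/eqP bk_nz] := b k =P 0%N; first by rewrite mcoeffXkM_eq0 // bk0.
by rewrite {1}(mnm_split1 bk_nz) mcoeffXkM_add (mcoeff_mderiv_sub1 _ bk_nz).
Qed.

Lemma msize_mderiv k f : (msize (mderiv k f) <= (msize f).-1)%N.
Proof.
rewrite msizeE; apply/bigmax_leqP_seq => b b_supp _.
have bk_supp : (b + U_(k))%MM \in msupp f.
  move: b_supp; rewrite !mcoeff_msupp mcoeff_mderiv.
  by apply: contra => /eqP ->; rewrite mul0rn.
by have := msize_mdeg_lt bk_supp; rewrite mdegD mdeg1 addn1 ltn_predRL.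
Qed.

End MonomialCalculus.

Lemma mderiv_neq0 (R : numDomainType) n (k : 'I_n) (f : {mpoly R[n]}) b :
  f@_b != 0 -> b k != 0%N -> mderiv k f != 0.
Proof.
move=> fb_nz bk_nz; apply: contraNneq fb_nz => df0.
have := mcoeff_mderiv_sub1 f bk_nz; rewrite df0 mcoeff0 => /esym/eqP.
by rewrite mulrn_eq0 (negbTE bk_nz).
Qed.

Section RaisingOperator.
Variables (C : numClosedFieldType) (n : nat).
Implicit Types (f : {mpoly C[n]}) (b : 'X_{1..n}) (k : 'I_n) (c : C).

Lemma mcoeff_euler f b : (euler f)@_b = (mdeg b)%:R * f@_b.
Proof.
rewrite /euler raddf_sum /=; under eq_bigr do rewrite mcoeff_Xk_mderiv.
by rewrite sumrMnr -mdegE mulr_natl.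
Qed.

Lemma euler_mpolyX b : euler ('X_[b] : {mpoly C[n]}) = (mdeg b)%:R *: 'X_[b].
Proof.
apply/mpolyP => b'; rewrite mcoeffZ mcoeff_euler !mcoeffX.
by case: eqP => [->|_]; rewrite ?mulr0.
Qed.

Lemma opE1E c k f : opE1 c k f = 'X_k * (euler f - c *: f).
Proof. by rewrite /opE1 mulrBr addrC scalerAr. Qed.

Lemma mcoeff_opE1 c k f b :
  (opE1 c k f)@_(U_(k) + b) = ((mdeg b)%:R - c) * f@_b.
Proof. by rewrite opE1E mcoeffXkM_add mcoeffB mcoeffZ mcoeff_euler mulrBl. Qed.

Lemma opE1_mpolyX c k b :
  opE1 c k 'X_[b] = ((mdeg b)%:R - c) *: 'X_[U_(k) + b].
Proof. by rewrite opE1E euler_mpolyX -scalerBl -scalerAr mpolyXD. Qed.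

End RaisingOperator.

Section ElementaryMatrices.
Variables (C : numClosedFieldType) (n : nat).

Lemma sh_neq0 (k : 'I_n) : (sh k == ord0) = false.
Proof. by apply/negbTE; rewrite eq_sym neq_lift. Qed.

Lemma sh_eq (i k : 'I_n) : (sh i == sh k) = (i == k).
Proof. by rewrite /sh (inj_eq (@lift_inj _ ord0)). Qed.

Lemma in_sl_delta (i j : 'I_n.+1) : i != j -> in_sl (delta_mx i j : 'M[C]_n.+1).
Proof.
move=> ij; rewrite /in_sl /mxtrace big1 // => l _; rewrite mxE.
by case: (l =P i) => [->|]; rewrite ?(negbTE ij).
Qed.

Lemma rep_delta_0sh c (k : 'I_n) (f : {mpoly C[n]}) :
  rep c (delta_mx ord0 (sh k)) f = opE1 c k f.
Proof.
rewrite /rep (bigD1 k) //= [X in _ + X + _ + _](bigD1 k) //= !mxE !eqxx sh_neq0.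
rewrite scale0r scale1r add0r !big1 ?addr0 ?add0r // => [i _|i _|i ik|i ik].
- by rewrite big1 // => j _; rewrite mxE sh_neq0 scale0r.
- by rewrite mxE sh_neq0 scale0r.
- by rewrite mxE eqxx sh_eq (negbTE ik) scale0r.
- by rewrite mxE sh_neq0 scale0r.
Qed.

Lemma rep_delta_sh0 c (k : 'I_n) (f : {mpoly C[n]}) :
  rep c (delta_mx (sh k) ord0) f = opE2 k f.
Proof.
rewrite /rep [X in _ + X + _](bigD1 k) //= !mxE !eqxx scale1r.
rewrite !big1 ?addr0 ?add0r // => [i _|i ik|i _|i _].
- by rewrite big1 // => j _; rewrite mxE sh_neq0 andbF scale0r.
- by rewrite mxE eqxx sh_eq (negbTE ik) scale0r.
- by rewrite mxE sh_neq0 scale0r.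
- by rewrite mxE sh_neq0 andbF scale0r.
Qed.

End ElementaryMatrices.

Section Subspaces.
Variables (C : numClosedFieldType) (n : nat) (Q : {mpoly C[n]} -> Prop).
Hypothesis Qsub : subspace Q.

Lemma subspaceZ s f : Q f -> Q (s *: f).
Proof. by case: Qsub => Q0 QZD Qf; have := QZD s f 0 Qf Q0; rewrite addr0. Qed.

Lemma subspaceD f g : Q f -> Q g -> Q (f + g).
Proof. by case: Qsub => _ QZD Qf Qg; have := QZD 1 f g Qf Qg; rewrite scale1r. Qed.

Lemma findim_mcoeff_bound : findim Q ->
  exists B, forall f, Q f -> forall b, (B <= mdeg b)%N -> f@_b = 0.
Proof.
case=> s s_span; exists (\max_(i < size s) msize s`_i) => f Qf b le_Bb.
have [coef ->] := s_span f Qf; rewrite raddf_sum big1 // => i _.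
rewrite -[LHS]/(mcoeff b (coef i *: s`_i)) mcoeffZ memN_msupp_eq0 ?mulr0 //; apply: msize_mdeg_ge.
exact: leq_trans (@leq_bigmax _ (fun i : 'I_(size s) => msize s`_i) i) le_Bb.
Qed.

End Subspaces.

Section InvariantSubspace.
Variables (C : numClosedFieldType) (n : nat) (k0 : 'I_n) (c : C).
Variable Q : {mpoly C[n]} -> Prop.
Hypothesis Qsub : subspace Q.
Hypothesis Q_mderiv : forall k f, Q f -> Q (mderiv k f).
Hypothesis Q_opE1 : forall k f, Q f -> Q (opE1 c k f).

Lemma Q_one f : Q f -> f != 0 -> Q 1.
Proof.
have [N] := ubnP (msize f); elim: N f => // N IH f; rewrite ltnS => f_size Qf f_nz.
have [le_f1|lt1f] := leqP (msize f) 1.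
  have f_const := msize1_polyC le_f1.
  have f0_nz : f@_0 != 0 by apply: contraNneq f_nz => f0; rewrite f_const f0.
  have := subspaceZ Qsub (f@_0)^-1 Qf.
  by rewrite {2}f_const -mul_mpolyC -mpolyCM mulVf // mpolyC1.
have [k lead_k] : exists k, mlead f k != 0%N.
  by apply: mnm_neq0_exists; rewrite -mdeg_eq0 -lt0n -ltnS mlead_deg.
apply: (IH (mderiv k f)); [|exact: Q_mderiv|].
- by apply: leq_ltn_trans (msize_mderiv k f) _; rewrite prednK ?(ltnW lt1f).
- by apply: mderiv_neq0 lead_k; rewrite mleadc_eq0.
Qed.

Lemma Q_raise_degree g b j : Q g -> g@_b != 0 ->
  (exists2 i, (i < j)%N & c = (mdeg b + i)%:R) \/
  exists g' b', [/\ Q g', mdeg b' = (mdeg b + j)%N & g'@_b' != 0].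
Proof.
move=> Qg gb_nz; elim: j => [|j [[i lt_ij c_i]|[g' [b' [Qg' deg_b' gb'_nz]]]]].
- by right; exists g, b; rewrite addn0.
- by left; exists i; rewrite // ltnW.
have [c_j|c_neq] := c =P (mdeg b + j)%:R; first by left; exists j.
right; exists (opE1 c k0 g'), (U_(k0) + b')%MM; split; first exact: Q_opE1.
  by rewrite mdegD mdeg1 deg_b' addnS.
by rewrite mcoeff_opE1 mulf_neq0 // subr_eq0 deg_b' eq_sym; apply/eqP.
Qed.

Lemma Q_mpolyX (m : nat) b : c = m%:R -> Q 1 -> (mdeg b <= m)%N -> Q 'X_[b].
Proof.
move=> c_m Q1; elim: {b}(mdeg b) {-2}b (erefl (mdeg b)) => [|d IH] b deg_b.
  by move/eqP: deg_b; rewrite mdeg_eq0 => /eqP -> _; rewrite mpolyX0.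
rewrite deg_b => lt_dm.
have [k bk_nz] : exists k, b k != 0%N by apply: mnm_neq0_exists; rewrite -mdeg_eq0 deg_b.
have def_b := mnm_split1 bk_nz.
have deg_b' : mdeg (b - U_(k))%MM = d.
  by move: deg_b; rewrite {1}def_b mdegD mdeg1 add1n => -[].
have Qb' : Q 'X_[b - U_(k)] by apply: (IH _ deg_b'); rewrite deg_b' ltnW.
have := Q_opE1 k Qb'.
rewrite opE1_mpolyX -def_b deg_b' c_m => Qb.
have coef_nz : (d%:R - m%:R : C) != 0 by rewrite subr_eq0 eqr_nat neq_ltn lt_dm.
by have := subspaceZ Qsub (d%:R - m%:R)^-1 Qb; rewrite scalerA mulVf // scale1r.
Qed.

Lemma Pm_sub_Q (m : nat) f : c = m%:R -> Q 1 -> Pm m f -> Q f.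
Proof.
move=> c_m Q1 f_size; rewrite (mpolyE f) big_seq; apply: (big_ind Q) => [|g h|b b_supp].
- by case: Qsub.
- exact: subspaceD.
apply: subspaceZ => //; apply: Q_mpolyX c_m Q1 _.
by rewrite -ltnS (leq_trans (msize_mdeg_lt b_supp) f_size).
Qed.

Variable B : nat.
Hypothesis Q_bounded : forall f, Q f -> forall b, (B <= mdeg b)%N -> f@_b = 0.

Lemma Q_degree_stalls g b : Q g -> g@_b != 0 ->
  exists2 i, (i < B)%N & c = (mdeg b + i)%:R.
Proof.
move=> Qg gb_nz; have [//|[g' [b' [Qg' deg_b' /eqP[]]]]] := Q_raise_degree B Qg gb_nz.
by apply: (Q_bounded Qg'); rewrite deg_b' leq_addl.
Qed.

Lemma Q_sub_Pm (m : nat) f : c = m%:R -> Q f -> Pm m f.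
Proof.
move=> c_m Qf; rewrite /Pm; have [-> | f_nz] := eqVneq f 0; first by rewrite msize0.
have lead_nz : f@_(mlead f) != 0 by rewrite mleadc_eq0.
have [i _] := Q_degree_stalls Qf lead_nz.
by rewrite c_m => /eqP; rewrite eqr_nat => /eqP ->; rewrite -mlead_deg // ltnS leq_addr.
Qed.

End InvariantSubspace.

Theorem proposition8p3 (C : numClosedFieldType) (n : nat) (a : C)
  (Q : {mpoly C[n]} -> Prop) :
  (1 <= n)%N ->
  subspace Q -> findim Q -> (exists f, Q f /\ f != 0) ->
  (forall X : 'M[C]_n.+1, in_sl X -> forall f, Q f -> Q (rho a X f)) ->
  exists m : nat,
    m_of n a = m%:R /\
    (forall f, Q f <-> Pm m f) /\
    (forall X : 'M[C]_n.+1, in_sl X -> forall f, Q f -> rho a X f = dpi m X f).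
Proof.
move=> n_gt0 Qsub Qfin [f0 [Qf0 f0_nz]] Qinv.
pose k0 : 'I_n := Ordinal n_gt0.
have Q_opE1 k f : Q f -> Q (opE1 (m_of n a) k f).
  move=> Qf; have := Qinv _ (@in_sl_delta C n ord0 (sh k) _) f Qf.
  by rewrite /rho rep_delta_0sh; apply; rewrite eq_sym sh_neq0.
have Q_mderiv k f : Q f -> Q (mderiv k f).
  move=> Qf; have := Qinv _ (@in_sl_delta C n (sh k) ord0 _) f Qf.
  rewrite /rho rep_delta_sh0 /opE2 sh_neq0 => /(_ isT) /(subspaceZ Qsub (-1)).
  by rewrite scaleN1r opprK.
have [B Q_bounded] := findim_mcoeff_bound Qfin.
have Q1 := Q_one Qsub Q_mderiv Qf0 f0_nz.
have one_nz : (1 : {mpoly C[n]})@_0 != 0 by rewrite mcoeff1 eqxx oner_neq0.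
have [m _] := Q_degree_stalls k0 Q_opE1 Q_bounded Q1 one_nz; rewrite mdeg0 add0n => a_m.
exists m; split=> //; split=> [f|X _ f _]; last by rewrite /rho /dpi a_m.
split; [exact: (Q_sub_Pm k0 Q_opE1 Q_bounded a_m) | exact: (Pm_sub_Q Qsub Q_opE1 a_m Q1)].
Qed.
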